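(* Let $p$ be a propositional variable. A substitution $\sigma$ is a unifier of $[1]p$ in $\mathbf{GLP}$ (i.e. $\mathbf{GLP}\vdash[1]\sigma(p)$) if and only if $\sigma\leq Q^k$ for some $k\geq 1$, where $Q^k$ denotes the substitution $p\mapsto Q^k(p)$ (leaving other variables fixed).
   Context: $\mathbf{GLP}$ is the polymodal logic with modalities $[0],[1],[2],\dots$ ($\langle k\rangle\phi:=\neg[k]\neg\phi$) axiomatized by: classical tautologies; $[k](\phi\to\psi)\to([k]\phi\to[k]\psi)$; $[k]([k]\phi\to\phi)\to[k]\phi$; $\langle j\rangle\phi\to[k]\langle j\rangle\phi$ for $j<k$; $[j]\phi\to[k]\phi$ for $j\leq k$; rules modus ponens and necessitation for each $[k]$. A substitution commutes with all connectives and modalities. For substitutions, $\tau\leq\sigma$ means there is a substitution $\theta$ with $\mathbf{GLP}\vdash\tau(q)\leftrightarrow\theta(\sigma(q))$ for every variable $q$. Define $Q_1(p):=p$, $Q_{i+1}(p):=p\lor[0]Q_i(p)$, and $Q^n(p):=\bigwedge_{i=1}^n([0]Q_i(p)\to Q_i(p))$. *)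

From Stdlib Require Import Arith.

Inductive form : Type :=
| Var : nat -> form
| Bot : form
| Imp : form -> form -> form
| Box : nat -> form -> form.

Definition Neg (a : form) : form := Imp a Bot.
Definition Top : form := Neg Bot.
Definition Or (a b : form) : form := Imp (Neg a) b.
Definition And (a b : form) : form := Neg (Imp a (Neg b)).
Definition Iff (a b : form) : form := And (Imp a b) (Imp b a).
Definition Dia (k : nat) (a : form) : form := Neg (Box k (Neg a)).

(* Classical tautologies: formulas true under every Boolean valuation
   treating variables and boxed formulas as propositional atoms. *)
Fixpoint beval (v : form -> bool) (a : form) : bool :=
  match a with
  | Var n => v (Var n)
  | Bot => false
  | Imp b c => implb (beval v b) (beval v c)
  | Box k b => v (Box k b)
  end.

Definition tautology (a : form) : Prop := forall v, beval v a = true.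

Inductive GLP : form -> Prop :=
| ax_taut : forall a, tautology a -> GLP a
| ax_K : forall k a b, GLP (Imp (Box k (Imp a b)) (Imp (Box k a) (Box k b)))
| ax_Lob : forall k a, GLP (Imp (Box k (Imp (Box k a) a)) (Box k a))
| ax_dia : forall j k a, j < k -> GLP (Imp (Dia j a) (Box k (Dia j a)))
| ax_mono : forall j k a, j <= k -> GLP (Imp (Box j a) (Box k a))
| r_mp : forall a b, GLP (Imp a b) -> GLP a -> GLP b
| r_nec : forall k a, GLP a -> GLP (Box k a).

Definition subst := nat -> form.

Fixpoint apply_subst (s : subst) (a : form) : form :=
  match a with
  | Var n => s n
  | Bot => Bot
  | Imp b c => Imp (apply_subst s b) (apply_subst s c)
  | Box k b => Box k (apply_subst s b)
  end.

Definition subst_le (tau sigma : subst) : Prop :=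
  exists theta : subst, forall q, GLP (Iff (tau q) (apply_subst theta (sigma q))).

(* Qi p i = Q_{i+1}(p):  Q_1 = p,  Q_{i+1} = p \/ [0] Q_i. *)
Fixpoint Qi (p : form) (i : nat) : form :=
  match i with
  | 0 => p
  | S i' => Or p (Box 0 (Qi p i'))
  end.

(* Qn p n = Q^n(p) = /\_{i=1}^n ([0]Q_i(p) -> Q_i(p)); empty conjunction = Top. *)
Fixpoint Qn (p : form) (n : nat) : form :=
  match n with
  | 0 => Top
  | S n' => And (Qn p n') (Imp (Box 0 (Qi p n')) (Qi p n'))
  end.

Definition QSubst (p : nat) (n : nat) : subst :=
  fun q => if Nat.eqb q p then Qn (Var p) n else Var q.

(* (<-) GLP proves [1]([0]X -> X), hence [1]Q^k(B) for every B; and sigma <= Q^k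
   makes sigma(p) equivalent to an instance Q^k(theta p).

   (->) Over GLP, [1] adds to [0] nothing but reflection: if GLP |- [1]A then
   GLP |- /\_i ([0]Y_i -> Y_i) -> A for some Y_i.  Otherwise {~A} together with all
   [0]Y -> Y extends to a maximal consistent set w, and every theorem of GLP is true
   when variables and [0]-formulas are read off w, [1]a means that a is derivable
   from those members x of w with |- x -> [1]x, and [k]a is true for k >= 2; so A
   would be derivable from w.  Each reflection premise is then traded for one more
   level of Q: |- Q_m(([0]Y -> Y) -> B) gives |- Q_{m+1}(B).  Hence |- Q_m(sigma p)
   for some m, which makes sigma(p) equivalent to Q^m(sigma p), i.e. sigma <= Q^m
   with theta = sigma. *)

From Stdlib Require Import Arith List Lia Classical ClassicalEpsilon Cantor.
Import ListNotations.

Fixpoint conj_list (l : list form) : form :=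
  match l with [] => Top | x :: l' => And x (conj_list l') end.

Definition reflection0 (Y : form) : form := Imp (Box 0 Y) Y.

Ltac bool_taut :=
  intros; unfold tautology in *; intros; cbn [conj_list] in *;
  unfold reflection0, Iff, And, Or, Dia, Top, Neg in *; simpl in *;
  repeat match goal with
  | v : form -> bool |- _ =>
    match goal with
    | |- context [beval v ?x] => destruct (beval v x)
    | |- context [v ?x] => destruct (v x)
    | H : context [beval v ?x] |- _ => destruct (beval v x)
    | H : context [v ?x] |- _ => destruct (v x)
    end
  end; simpl in *; auto; try discriminate.

(* With H : GLP a, [premise H] turns the goal GLP c into GLP (Imp a c). *)
Ltac premise H := eapply r_mp; [| exact H].

Ltac taut := apply ax_taut; bool_taut.

Lemma box_mono k a b : GLP (Imp a b) -> GLP (Imp (Box k a) (Box k b)).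
Proof. intro H. exact (r_mp _ _ (ax_K k a b) (r_nec k _ H)). Qed.

Lemma box_mono2 k a b c :
  GLP (Imp a (Imp b c)) -> GLP (Imp (Box k a) (Imp (Box k b) (Box k c))).
Proof. intro H. premise (box_mono k _ _ H). premise (ax_K k b c). taut. Qed.

Lemma box_and k a b : GLP (Imp (Box k a) (Imp (Box k b) (Box k (And a b)))).
Proof. apply box_mono2. taut. Qed.

Lemma box_trans k a : GLP (Imp (Box k a) (Box k (Box k a))).
Proof.
  set (X := And a (Box k a)).
  assert (HX : GLP (Imp a (Imp (Box k X) X))).
  { premise (box_mono k X a ltac:(unfold X; taut)). unfold X; taut. }
  premise (box_mono k _ _ HX). premise (ax_Lob k X).
  premise (box_mono k X (Box k a) ltac:(unfold X; taut)). taut.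
Qed.

(* Split on [0]a: if it holds, [0]a -> [1]a; if not, <0>~a -> [1]<0>~a carries ~[0]a
   under [1]. *)
Lemma box1_reflection0 a : GLP (Box 1 (reflection0 a)).
Proof.
  unfold reflection0.
  assert (Hpos : GLP (Imp (Box 0 a) (Box 1 (Imp (Box 0 a) a)))).
  { premise (ax_mono 0 1 a ltac:(lia)). premise (box_mono 1 a (Imp (Box 0 a) a) ltac:(taut)).
    taut. }
  assert (Hneg : GLP (Imp (Dia 0 (Neg a)) (Imp (Box 0 a) a))).
  { premise (box_mono 0 a (Neg (Neg a)) ltac:(taut)). taut. }
  premise Hpos. premise (box_mono 1 _ _ Hneg). premise (ax_dia 0 1 (Neg a) ltac:(lia)).
  premise (box_mono 0 (Neg (Neg a)) a ltac:(taut)). taut.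
Qed.

Lemma conj_list_app l1 l2 :
  GLP (Imp (conj_list (l1 ++ l2)) (And (conj_list l1) (conj_list l2))).
Proof.
  induction l1 as [|x l1 IH]; simpl; [taut|].
  premise IH. taut.
Qed.

Definition entails (G : form -> Prop) (f : form) : Prop :=
  exists l, (forall x, In x l -> G x) /\ GLP (Imp (conj_list l) f).

Lemma entails_GLP G f : GLP f -> entails G f.
Proof. intro H. exists []. split; [intros _ []|]. premise H. taut. Qed.

Lemma entails_member (G : form -> Prop) f : G f -> entails G f.
Proof. intro H. exists [f]. split; [intros x [<-|[]]; exact H|]. taut. Qed.

Lemma entails_mono (G H : form -> Prop) f :
  (forall x, G x -> H x) -> entails G f -> entails H f.
Proof. intros GH [l [Hl Hf]]. exists l. auto. Qed.

Lemma entails_mp G a b : entails G (Imp a b) -> entails G a -> entails G b.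
Proof.
  intros [l1 [H1 D1]] [l2 [H2 D2]]. exists (l1 ++ l2). split.
  - intros x Hx. apply in_app_or in Hx as [Hx|Hx]; auto.
  - premise D1. premise D2. premise (conj_list_app l1 l2). taut.
Qed.

Definition extend (G : form -> Prop) (f : form) : form -> Prop := fun y => G y \/ y = f.

Lemma conj_list_split G f l : (forall x, In x l -> extend G f x) ->
  exists l1, (forall x, In x l1 -> G x) /\ GLP (Imp (conj_list l1) (Imp f (conj_list l))).
Proof.
  induction l as [|y l IH]; intros Hl.
  - exists []. split; [intros _ []|taut].
  - destruct IH as [l1 [H1 D]]; [intros x Hx; apply Hl; simpl; auto|].
    destruct (Hl y (or_introl eq_refl)) as [Gy| ->].
    + exists (y :: l1). split; [intros x [<-|Hx]; auto|]. premise D. taut.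
    + exists l1. split; [exact H1|]. premise D. taut.
Qed.

Lemma entails_extend G f b : entails (extend G f) b -> entails G (Imp f b).
Proof.
  intros [l [Hl D]]. destruct (conj_list_split G f l Hl) as [l1 [H1 D1]].
  exists l1. split; [exact H1|]. premise D. premise D1. taut.
Qed.

Definition consistent (G : form -> Prop) : Prop := ~ entails G Bot.

Lemma consistent_sub (G H : form -> Prop) :
  (forall x, G x -> H x) -> consistent H -> consistent G.
Proof. intros GH C D. exact (C (entails_mono G H Bot GH D)). Qed.

Lemma inconsistent_extend G f : ~ consistent (extend G f) -> entails G (Neg f).
Proof. intro N. apply entails_extend. exact (NNPP _ N). Qed.

Definition maximal_consistent (w : form -> Prop) : Prop :=
  consistent w /\ forall f, w f \/ w (Neg f).

Lemma maximal_consistent_closed w f : maximal_consistent w -> entails w f -> w f.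
Proof.
  intros [C M] D. destruct (M f) as [Hf|Hn]; [exact Hf|].
  exfalso. exact (C (entails_mp w f Bot (entails_member w _ Hn) D)).
Qed.

Fixpoint form_code (f : form) : nat :=
  match f with
  | Var n => to_nat (0, n)
  | Bot => to_nat (1, 0)
  | Imp a b => to_nat (2, to_nat (form_code a, form_code b))
  | Box k a => to_nat (3, to_nat (k, form_code a))
  end.

Lemma to_nat_inj (x y : nat * nat) : to_nat x = to_nat y -> x = y.
Proof. intro H. rewrite <- (cancel_of_to x), <- (cancel_of_to y), H. reflexivity. Qed.

Lemma form_code_inj f g : form_code f = form_code g -> f = g.
Proof.
  revert g. induction f; intros [] H; cbn [form_code] in H;
    apply to_nat_inj, pair_equal_spec in H as [Htag H];
    try discriminate; try (subst; reflexivity).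
  - apply to_nat_inj, pair_equal_spec in H as [H1 H2]. f_equal; auto.
  - apply to_nat_inj, pair_equal_spec in H as [H1 H2]. f_equal; auto.
Qed.

Fixpoint lindenbaum_chain (G : form -> Prop) (n : nat) : form -> Prop :=
  match n with
  | 0 => G
  | S m => fun x => lindenbaum_chain G m x \/
                  (form_code x = m /\ consistent (extend (lindenbaum_chain G m) x))
  end.

Definition lindenbaum (G : form -> Prop) (x : form) : Prop := exists n, lindenbaum_chain G n x.

Lemma lindenbaum_chain_mono G m n x :
  m <= n -> lindenbaum_chain G m x -> lindenbaum_chain G n x.
Proof. induction 1; simpl; auto. Qed.

Lemma lindenbaum_chain_consistent G n : consistent G -> consistent (lindenbaum_chain G n).
Proof.
  intro C. induction n as [|m IH]; [exact C|].
  destruct (classic (exists x, form_code x = m /\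
                               consistent (extend (lindenbaum_chain G m) x)))
    as [[x [Hx Cx]]|N].
  - apply (consistent_sub _ _ ) with (2 := Cx).
    intros y [Hy|[Hy _]]; [left; exact Hy|right; apply form_code_inj; congruence].
  - apply (consistent_sub _ _) with (2 := IH).
    intros y [Hy|Hy]; [exact Hy|exfalso; apply N; exists y; exact Hy].
Qed.

Lemma lindenbaum_list_in_chain G l :
  (forall x, In x l -> lindenbaum G x) -> exists n, forall x, In x l -> lindenbaum_chain G n x.
Proof.
  induction l as [|y l IH]; intros Hl.
  - exists 0. intros _ [].
  - destruct IH as [n Hn]; [intros x Hx; apply Hl; simpl; auto|].
    destruct (Hl y (or_introl eq_refl)) as [m Hm].
    exists (m + n). intros x [<-|Hx].
    + apply (lindenbaum_chain_mono G m); [lia|exact Hm].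
    + apply (lindenbaum_chain_mono G n); [lia|auto].
Qed.

Lemma lindenbaum_consistent G : consistent G -> consistent (lindenbaum G).
Proof.
  intros C [l [Hl D]]. destruct (lindenbaum_list_in_chain G l Hl) as [n Hn].
  apply (lindenbaum_chain_consistent G n C). exists l. auto.
Qed.

Lemma lindenbaum_decides G f : lindenbaum G f \/ ~ consistent (extend (lindenbaum G) f).
Proof.
  destruct (classic (consistent (extend (lindenbaum_chain G (form_code f)) f))) as [C|N].
  - left. exists (S (form_code f)). right. auto.
  - right. contradict N. apply (consistent_sub _ _) with (2 := N).
    intros x [Hx|Hx]; [left; exists (form_code f)|right]; auto.
Qed.

Lemma lindenbaum_maximal G :
  consistent G -> exists w, (forall x, G x -> w x) /\ maximal_consistent w.
Proof.
  intro C. pose proof (lindenbaum_consistent G C) as Cw.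
  exists (lindenbaum G). split; [intros x Hx; exists 0; exact Hx|split; [exact Cw|]].
  intro f. destruct (lindenbaum_decides G f) as [Hf|Nf]; [left; exact Hf|right].
  destruct (lindenbaum_decides G (Neg f)) as [Hn|Nn]; [exact Hn|].
  exfalso. apply Cw.
  exact (entails_mp _ _ _ (inconsistent_extend _ _ Nn) (inconsistent_extend _ _ Nf)).
Qed.

Definition stable (x : form) : Prop := GLP (Imp x (Box 1 x)).

Lemma stable_conj_list l : (forall x, In x l -> stable x) -> stable (conj_list l).
Proof.
  induction l as [|x l IH]; intros Hl; simpl.
  - unfold stable. premise (r_nec 1 Top ltac:(taut)). taut.
  - assert (Hx : stable x) by (apply Hl; left; reflexivity).
    assert (Hc : stable (conj_list l)) by (apply IH; intros y Hy; apply Hl; right; exact Hy).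
    unfold stable in *. premise Hx. premise Hc. premise (box_and 1 x (conj_list l)). taut.
Qed.

Lemma stable_box0 a : stable (Box 0 a).
Proof.
  unfold stable. premise (box_trans 0 a). premise (ax_mono 0 1 (Box 0 a) ltac:(lia)). taut.
Qed.

Lemma stable_dia0 a : stable (Dia 0 a).
Proof. apply ax_dia. lia. Qed.

Lemma stable_reflection0 a : stable (reflection0 a).
Proof. unfold stable. premise (box1_reflection0 a). taut. Qed.

Lemma entails_stable_lob (S : form -> Prop) a :
  (forall x, S x -> stable x) -> entails S (Imp (Box 1 a) a) -> entails S a.
Proof.
  intros HS [l [Hl D]]. exists l. split; [exact Hl|].
  pose proof (stable_conj_list l (fun x Hx => HS x (Hl x Hx))) as Hc.
  premise Hc. premise (box_mono 1 _ _ D). premise (ax_Lob 1 a). premise D. taut.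
Qed.

Lemma maximal_consistent_GLP w f : maximal_consistent w -> GLP f -> w f.
Proof. intros M H. exact (maximal_consistent_closed w f M (entails_GLP w f H)). Qed.

Lemma maximal_consistent_mp w a b : maximal_consistent w -> w (Imp a b) -> w a -> w b.
Proof.
  intros M Hab Ha. apply (maximal_consistent_closed w b M).
  exact (entails_mp w a b (entails_member w _ Hab) (entails_member w a Ha)).
Qed.

Definition stable_part (w : form -> Prop) (x : form) : Prop := w x /\ stable x.

Fixpoint holds (w : form -> Prop) (f : form) : Prop :=
  match f with
  | Var n => w (Var n)
  | Bot => False
  | Imp a b => holds w a -> holds w b
  | Box 0 a => w (Box 0 a)
  | Box 1 a => entails (stable_part w) a
  | Box _ _ => True
  end.

Definition holds_val (w : form -> Prop) (f : form) : bool :=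
  if excluded_middle_informative (holds w f) then true else false.

Lemma beval_holds_val w f : beval (holds_val w) f = true <-> holds w f.
Proof.
  induction f as [n| |a IHa b IHb|k a _]; simpl.
  1, 4: unfold holds_val; destruct (excluded_middle_informative _) as [H|H];
        simpl; split; intro; first [reflexivity|discriminate|contradiction|assumption].
  - split; [discriminate|contradiction].
  - rewrite <- IHa, <- IHb.
    destruct (beval (holds_val w) a), (beval (holds_val w) b); simpl; intuition discriminate.
Qed.

Lemma entails_stable_part w x : w x -> stable x -> entails (stable_part w) x.
Proof. intros Hw Hs. apply entails_member. split; assumption. Qed.

Theorem holds_of_GLP w :
  maximal_consistent w -> (forall a, w (reflection0 a)) -> forall f, GLP f -> holds w f.
Proof.
  intros M R f Hf.
  induction Hf as [f Ht|k a b|k a|j k a Hjk|j k a Hjk|a b _ IHab _ IHa|k a Ha IHa].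
  - apply beval_holds_val, Ht.
  - destruct k as [|[|k]]; simpl; trivial.
    + intros Hab Ha. exact (maximal_consistent_mp w _ _ M
        (maximal_consistent_mp w _ _ M (maximal_consistent_GLP w _ M (ax_K 0 a b)) Hab) Ha).
    + apply entails_mp.
  - destruct k as [|[|k]]; simpl; trivial.
    + apply (maximal_consistent_mp w _ _ M), (maximal_consistent_GLP w _ M (ax_Lob 0 a)).
    + apply entails_stable_lob. intros x [_ Hx]. exact Hx.
  - destruct k as [|[|k]]; [lia| |simpl; trivial].
    destruct j as [|j]; [|lia]. simpl. intro Hd.
    apply entails_stable_part; [|apply stable_dia0].
    destruct (proj2 M (Box 0 (Neg a))) as [Hb|Hb]; [contradiction|exact Hb].
  - destruct j as [|[|j]], k as [|[|k]]; simpl; trivial; try lia.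
    intro Ha. apply (entails_mp _ (Box 0 a)).
    + apply entails_stable_part; [apply R|apply stable_reflection0].
    + apply entails_stable_part; [exact Ha|apply stable_box0].
  - exact (IHab IHa).
  - destruct k as [|[|k]]; simpl; trivial.
    + apply (maximal_consistent_GLP w _ M), r_nec, Ha.
    + apply entails_GLP, Ha.
Qed.

Lemma list_of_reflections l :
  (forall x, In x l -> exists Y, x = reflection0 Y) -> exists Ys, l = map reflection0 Ys.
Proof.
  induction l as [|x l IH]; intros Hl; [exists []; reflexivity|].
  destruct (Hl x (or_introl eq_refl)) as [Y ->].
  destruct IH as [Ys ->]; [intros y Hy; apply Hl; right; exact Hy|].
  exists (Y :: Ys). reflexivity.
Qed.

Theorem box1_reflection_conservative A :
  GLP (Box 1 A) -> exists Ys, GLP (Imp (conj_list (map reflection0 Ys)) A).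
Proof.
  intro HA. apply NNPP. intro N.
  set (Refl := fun f => exists Y, f = reflection0 Y).
  assert (C : consistent (extend Refl (Neg A))).
  { intro D. apply entails_extend in D as [l [Hl D]].
    destruct (list_of_reflections l Hl) as [Ys ->].
    apply N. exists Ys. premise D. taut. }
  destruct (lindenbaum_maximal _ C) as [w [Hw M]].
  assert (R : forall a, w (reflection0 a)) by (intro a; apply Hw; left; exists a; reflexivity).
  pose proof (holds_of_GLP w M R _ HA) as HwA. simpl in HwA.
  apply (proj1 M), (entails_mp w A Bot).
  - apply entails_member, Hw. right. reflexivity.
  - apply (entails_mono (stable_part w)); [intros x [Hx _]; exact Hx|exact HwA].
Qed.

Lemma box0_and_box0 Y : GLP (Imp (Box 0 Y) (Box 0 (And Y (Box 0 Y)))).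
Proof. premise (box_trans 0 Y). premise (box_and 0 Y (Box 0 Y)). taut. Qed.

Lemma Qi_discharge_reflection Y B n :
  GLP (Imp (And Y (Box 0 Y)) (Imp (Qi (Imp (reflection0 Y) B) n) (Qi B n))).
Proof.
  induction n as [|n IH]; simpl; [taut|].
  premise (box0_and_box0 Y). premise (box_mono2 0 _ _ _ IH). taut.
Qed.

(* If [0]Y holds, the premise [0]Y -> Y is discharged under [0] by
   Qi_discharge_reflection; otherwise that premise is true outright. *)
Lemma Qi_reflection_step Y B n :
  GLP (Imp (Qi (Imp (reflection0 Y) B) n)
           (Imp (Box 0 (Qi (Imp (reflection0 Y) B) n)) (Qi B (S n)))).
Proof.
  induction n as [|n IH]; simpl.
  - premise (box0_and_box0 Y). premise (box_mono2 0 _ _ _ (Qi_discharge_reflection Y B 0)).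
    taut.
  - premise (box0_and_box0 Y).
    premise (box_mono2 0 _ _ _ (Qi_discharge_reflection Y B (S n))).
    premise (box_mono2 0 _ _ _ IH). premise (box_trans 0 (Qi (Imp (reflection0 Y) B) n)).
    simpl. taut.
Qed.

Lemma Qi_of_reflections Ys B :
  GLP (Imp (conj_list (map reflection0 Ys)) B) -> exists j, GLP (Qi B j).
Proof.
  revert B. induction Ys as [|Y Ys IH]; intros B H; simpl in H.
  - exists 0. premise H. taut.
  - destruct (IH (Imp (reflection0 Y) B)) as [j Hj]; [premise H; taut|].
    exists (S j). premise (r_nec 0 _ Hj). premise Hj. premise (Qi_reflection_step Y B j). taut.
Qed.

Lemma Qi_intro A i : GLP (Imp A (Qi A i)).
Proof. destruct i; simpl; taut. Qed.

Lemma Qn_intro A k : GLP (Imp A (Qn A k)).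
Proof.
  induction k as [|k IH]; simpl; [taut|].
  premise IH. premise (Qi_intro A k). taut.
Qed.

Lemma Qn_Qi_elim A j : GLP (Imp (Qn A j) (Imp (Qi A j) A)).
Proof. induction j as [|j IH]; simpl; [taut|]. premise IH. taut. Qed.

Lemma Qn_iff_of_Qi A j : GLP (Qi A j) -> GLP (Iff A (Qn A (S j))).
Proof.
  intro H. premise H. premise (Qn_intro A (S j)). premise (Qn_Qi_elim A j). simpl. taut.
Qed.

Lemma box1_Qn A k : GLP (Box 1 (Qn A k)).
Proof.
  induction k as [|k IH]; simpl; [apply r_nec; taut|].
  premise IH. premise (box1_reflection0 (Qi A k)).
  premise (box_and 1 (Qn A k) (reflection0 (Qi A k))). taut.
Qed.

Lemma apply_subst_Qi s p i : apply_subst s (Qi (Var p) i) = Qi (s p) i.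
Proof. induction i as [|i IH]; simpl; [reflexivity|]. rewrite IH. reflexivity. Qed.

Lemma apply_subst_Qn s p k : apply_subst s (Qn (Var p) k) = Qn (s p) k.
Proof. induction k as [|k IH]; simpl; [reflexivity|]. rewrite IH, apply_subst_Qi. reflexivity. Qed.

Theorem mainTheorem2 (p : nat) (sigma : subst) :
  GLP (Box 1 (sigma p)) <-> exists k : nat, 1 <= k /\ subst_le sigma (QSubst p k).
Proof.
  split.
  - intro H.
    destruct (box1_reflection_conservative _ H) as [Ys HYs].
    destruct (Qi_of_reflections Ys _ HYs) as [j Hj].
    exists (S j). split; [lia|]. exists sigma. intro q. unfold QSubst.
    destruct (Nat.eqb_spec q p) as [->|_].
    + rewrite apply_subst_Qn. exact (Qn_iff_of_Qi _ j Hj).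
    + simpl. taut.
  - intros [k [_ [theta Htheta]]]. specialize (Htheta p).
    unfold QSubst in Htheta. rewrite Nat.eqb_refl, apply_subst_Qn in Htheta.
    premise (box1_Qn (theta p) k). apply box_mono. premise Htheta. taut.
Qed.
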